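(* For any $1 \leq i \neq j \leq r$ and $1 \leq s \leq l$, the graph with vertex set $V_i \cup V_j$ whose edges are the edges of $\mathcal{H}(V_i,V_j)$ of color $m_s$ contains no $K_{2,2}$ (4-cycle).
   Context: Let $r \geq 2$ and $l \geq 1$ be integers and $q$ a power of an odd prime. Let $\alpha_1, \dots, \alpha_r$ be distinct elements of $\mathbb{F}_q$, and let $m_1, \dots, m_l$ be distinct elements of $\mathbb{F}_q^* = \mathbb{F}_q\setminus\{0\}$ such that $m_s(\alpha_k - \alpha_i) \neq m_t(\alpha_k - \alpha_j)$ whenever $1 \leq s,t \leq l$ and $i,j,k$ are distinct integers in $\{1,\dots,r\}$. For $1 \leq i \leq r$ let $V_i = \mathbb{F}_q \times \mathbb{F}_q \times \{i\}$. For $x,y \in \mathbb{F}_q$, $a \in \mathbb{F}_q^*$, $s \in \{1,\dots,l\}$ let \[ e(x,y,a,m_s) = \{(x + \alpha_i m_s a,\; y + \alpha_i m_s a^2,\; i) : 1 \leq i \leq r\}. \] $\mathcal{H}$ is the $r$-uniform hypergraph with vertex set $V_1 \cup \dots \cup V_r$ and edge set $\{e(x,y,a,m_s) : x,y \in \mathbb{F}_q,\ a \in \mathbb{F}_q^*,\ 1 \leq s \leq l\}$; it is linear, so any pair of vertices lies in at most one edge of $\mathcal{H}$. For $i \neq j$, $\mathcal{H}(V_i,V_j)$ is the bipartite graph with parts $V_i$ and $V_j$ in which $u \in V_i$ and $w \in V_j$ are adjacent iff $\{u,w\} \subseteq e$ for some edge $e$ of $\mathcal{H}$. An edge $\{u,w\}$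 of $\mathcal{H}(V_i,V_j)$ has color $m_s$ if the (unique) edge $e$ of $\mathcal{H}$ containing $\{u,w\}$ is of the form $e(x,y,a,m_s)$. *)

From HB Require Import structures.
From mathcomp Require Import all_boot all_order all_algebra all_field.
Set Implicit Arguments. Unset Strict Implicit. Unset Printing Implicit Defensive.
Import GRing.Theory.
Local Open Scope ring_scope.

(* The hyperedge e(x,y,a,ms) of H, restricted to its vertices in V_i:
   the point (x + alpha_i ms a, y + alpha_i ms a^2) of V_i = F_q x F_q x {i}. *)
Definition edge_pt (F : fieldType) (r : nat) (alpha : 'I_r -> F)
  (x y a ms : F) (i : 'I_r) : F * F :=
  (x + alpha i * ms * a, y + alpha i * ms * a ^+ 2).

Definition colored_adj (F : fieldType) (r : nat) (alpha : 'I_r -> F)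
  (ms : F) (i j : 'I_r) (u w : F * F) : Prop :=
  exists x y a : F, a != 0 /\ u = edge_pt alpha x y a ms i /\
                    w = edge_pt alpha x y a ms j.

Definition has_colored_K22 (F : fieldType) (r : nat) (alpha : 'I_r -> F)
  (ms : F) (i j : 'I_r) : Prop :=
  exists u1 u2 w1 w2 : F * F, u1 != u2 /\ w1 != w2 /\
    colored_adj alpha ms i j u1 w1 /\ colored_adj alpha ms i j u1 w2 /\
    colored_adj alpha ms i j u2 w1 /\ colored_adj alpha ms i j u2 w2.

(* Put c := (alpha_j - alpha_i) m_s.  A color-m_s edge between u in V_i and
   w in V_j forces w - u to lie on the parabola {(c a, c a^2)}, so a K_{2,2}
   on u1, u2, w1, w2 yields points s1 - s2 = s3 - s4 (= w1 - w2) on it.  Once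
   2 <> 0 and c <> 0, a chord of the parabola is determined by its direction
   and length, which forces s1 = s3, i.e. u1 = u2. *)

From HB Require Import structures.
From mathcomp Require Import all_boot all_order all_algebra all_field.
From mathcomp Require Import ring.
Import GRing.Theory.
Local Open Scope ring_scope.

Lemma two_neq0_of_odd_card {R : finNzRingType} : odd #|R| -> 2%:R != 0 :> R.
Proof.
move=> oddR; apply/negP => /eqP two0.
have pchar2 : (2%N \in [pchar R]) by rewrite inE /= two0.
move: oddR (finNzRing_gt1 R).
by rewrite [#|R|](card_pprimeChar pchar2) oddX orbF => /eqP ->.
Qed.

(* The Sidon property in difference form; s2 = s4 then follows too. *)
Definition sidon {V : zmodType} (S : V -> Prop) : Prop :=
  forall s1 s2 s3 s4, S s1 -> S s2 -> S s3 -> S s4 ->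
    s1 - s2 = s3 - s4 -> s1 != s2 -> s1 = s3.

Lemma sidon_K22_free {V : zmodType} {S : V -> Prop} {u1 u2 w1 w2 : V} :
  sidon S -> w1 != w2 ->
  S (w1 - u1) -> S (w2 - u1) -> S (w1 - u2) -> S (w2 - u2) -> u1 = u2.
Proof.
move=> sidonS w12 S11 S21 S12 S22.
have same_diff : w1 - u1 - (w2 - u1) = w1 - u2 - (w2 - u2).
  by rewrite !opprB !addrA !subrK.
have neq_diff : w1 - u1 != w2 - u1 by apply: contra_neq w12 => /addIr.
have := sidonS _ _ _ _ S11 S21 S12 S22 same_diff neq_diff.
by move/addrI/oppr_inj.
Qed.

Definition parabola {R : pzRingType} (c : R) (v : R * R) : Prop :=
  exists a, v = (c * a, c * a ^+ 2).

Lemma sidon_parabola {F : fieldType} {c : F} :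
  2%:R != 0 :> F -> c != 0 -> sidon (parabola c).
Proof.
move=> two_nz c_nz _ _ _ _ [a1 ->] [a2 ->] [a3 ->] [a4 ->] [].
rewrite -!mulrBr => /(mulfI c_nz) eq_diff /(mulfI c_nz) eq_sqr a12.
have a12_nz : a1 - a2 != 0 by rewrite subr_eq0; apply: contra_neq a12 => ->.
have eq_sum : a1 + a2 = a3 + a4.
  by apply: (mulfI a12_nz); rewrite -subr_sqr eq_sqr subr_sqr eq_diff.
suff -> : a1 = a3 by [].
have double (x y : F) : 2%:R * x = (x - y) + (x + y) by ring.
by apply: (mulfI two_nz); rewrite (double a1 a2) (double a3 a4) eq_diff eq_sum.
Qed.

Lemma colored_adj_parabola (F : fieldType) (r : nat) (alpha : 'I_r -> F)
    (ms : F) (i j : 'I_r) (u w : F * F) :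
  colored_adj alpha ms i j u w -> parabola ((alpha j - alpha i) * ms) (w - u).
Proof.
move=> [x [y [a [_ [-> ->]]]]]; exists a.
by congr (_, _); rewrite /= /edge_pt /=; ring.
Qed.

Theorem lemma3p7 (F : finFieldType) (hodd : odd #|F|)
  (r l : nat) (hr : (2 <= r)%N) (hl : (1 <= l)%N)
  (alpha : 'I_r -> F) (halpha : injective alpha)
  (m : 'I_l -> F) (hm : injective m) (hm0 : forall s, m s != 0)
  (hcond : forall (s t : 'I_l) (i j k : 'I_r), i != j -> j != k -> i != k ->
     m s * (alpha k - alpha i) != m t * (alpha k - alpha j))
  (i j : 'I_r) (hij : i != j) (s : 'I_l) :
  ~ has_colored_K22 alpha (m s) i j.
Proof.
have c_nz : (alpha j - alpha i) * m s != 0.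
  by rewrite mulf_neq0 // subr_eq0 (inj_eq halpha) eq_sym.
have sidonP := sidon_parabola (two_neq0_of_odd_card hodd) c_nz.
move=> [u1 [u2 [w1 [w2 [/eqP u12 [w12 [A11 [A12 [A21 A22]]]]]]]]].
apply: u12; apply: (sidon_K22_free sidonP w12).
- exact: colored_adj_parabola A11.
- exact: colored_adj_parabola A12.
- exact: colored_adj_parabola A21.
- exact: colored_adj_parabola A22.
Qed.
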